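(* Let $(X,\to,d_A)$ be a finitely branching metric transition system over $A$, and let $\alpha\colon\mathit{DPMet}(X)\to\mathrm{Pre}(X)$, $\alpha(d)=\{(x,y)\mid d(x,y)=0\}$, and $\gamma\colon\mathrm{Pre}(X)\to\mathit{DPMet}(X)$, $\gamma(R)=1-\chi_R$. Then $\alpha\circ\beta_S(d)=\beta_s\circ\alpha(d)$ for every $d\in\mathit{DPMet}(X)$, and consequently $\mu\,\beta_s=\alpha(\mu\,\beta_S)$.
   Context: $\delta(x)=\{(a,x')\mid x\xrightarrow{a}x'\}$, $\delta_a(x)=\{x'\mid x\xrightarrow{a}x'\}$; finitely branching: all $\delta(x)$ finite; $d_A$ is a metric on $A$ with values in $[0,1]$. $\mathit{DPMet}(X)$: directed pseudo-metrics on $X$, ordered pointwise; $\mathrm{Pre}(X)$: preorders on $X$, ordered by $\supseteq$; least fixpoints are taken in these lattices; $\chi_R$ is the characteristic function of $R$. $\beta_S(d)(x,y)=\bigvee_{(a,x')\in\delta(x)}\bigwedge_{(b,y')\in\delta(y)}\max\{d_A(a,b),d(x',y')\}$ (the directed simulation behaviour function; empty join $0$, empty meet $1$). $\beta_s(R)=\{(x_1,x_2)\mid\forall a\in A,\,y_1\in\delta_a(x_1)\,\exists y_2\in\delta_a(x_2)\colon y_1Ry_2\}$ (the simulation behaviour function). *)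

From HB Require Import structures.
From mathcomp Require Import all_boot all_order all_algebra.
From mathcomp Require Import boolp classical_sets cardinality reals.
Set Implicit Arguments. Unset Strict Implicit. Unset Printing Implicit Defensive.
Import Order.TTheory GRing.Theory Num.Theory.
Local Open Scope classical_set_scope.
Local Open Scope ring_scope.

Section Defs.
Variables (R : realType) (X A : Type).

Definition delta (trans : X -> A -> X -> Prop) (x : X) : set (A * X) :=
  [set p | trans x p.1 p.2].

Definition finitely_branching (trans : X -> A -> X -> Prop) : Prop :=
  forall x, finite_set (delta trans x).

Definition is_metric01 (dA : A -> A -> R) : Prop :=
  (forall a b, 0 <= dA a b <= 1) /\
  (forall a b, dA a b = 0 <-> a = b) /\
  (forall a b, dA a b = dA b a) /\
  (forall a b c, dA a c <= dA a b + dA b c).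

Definition DPMet (d : X -> X -> R) : Prop :=
  (forall x y, 0 <= d x y <= 1) /\
  (forall x, d x x = 0) /\
  (forall x y z, d x z <= d x y + d y z).

Definition preorder (Rl : X -> X -> Prop) : Prop :=
  (forall x, Rl x x) /\ (forall x y z, Rl x y -> Rl y z -> Rl x z).

Definition join0 (S : set R) : R := if pselect (S !=set0) then sup S else 0.
Definition meet1 (S : set R) : R := if pselect (S !=set0) then inf S else 1.

Definition betaS (trans : X -> A -> X -> Prop) (dA : A -> A -> R)
  (d : X -> X -> R) (x y : X) : R :=
  join0 [set (meet1 [set Num.max (dA ax.1 bz.1) (d ax.2 bz.2)
                     | bz in delta trans y])
        | ax in delta trans x].

Definition betas (trans : X -> A -> X -> Prop) (Rl : X -> X -> Prop)
  (x1 x2 : X) : Prop :=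
  forall a y1, trans x1 a y1 -> exists y2, trans x2 a y2 /\ Rl y1 y2.

Definition alpha (d : X -> X -> R) : X -> X -> Prop := fun x y => d x y = 0.

Definition gamma (Rl : X -> X -> Prop) : X -> X -> R :=
  fun x y => 1 - (if pselect (Rl x y) then 1 else 0).

Definition is_lfp_DPMet (F : (X -> X -> R) -> (X -> X -> R)) (m : X -> X -> R) : Prop :=
  DPMet m /\ F m = m /\
  (forall d, DPMet d -> F d = d -> forall x y, m x y <= d x y).

(* least fixpoint of F in Pre(X), ordered by reverse inclusion ⊇ *)
Definition is_lfp_Pre (F : (X -> X -> Prop) -> (X -> X -> Prop)) (Rl : X -> X -> Prop) : Prop :=
  preorder Rl /\ F Rl = Rl /\
  (forall S, preorder S -> F S = S -> forall x y, S x y -> Rl x y).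

End Defs.

(* Zero distance under beta_S(d) means that each move (a, x') of x is matched
   by the moves of y at infimum distance 0.  Finite branching turns that
   infimum into a minimum, so some move (a, y') of y has d(x', y') = 0: this is
   exactly the simulation condition of beta_s for alpha(d).
   The least fixpoint of beta_S is obtained as in the Knaster-Tarski theorem,
   as the meet of all pre-fixpoints in DPMet(X).  Its kernel is a fixpoint of
   beta_s since alpha commutes with the behaviour functions, and it contains
   every fixpoint S of beta_s in Pre(X): gamma(S) is a pre-fixpoint of beta_S,
   so the least fixpoint lies below gamma(S), which vanishes on S. *)

From mathcomp Require Import all_boot all_order all_algebra.
From mathcomp Require Import boolp classical_sets cardinality reals.
From mathcomp Require Import lra.
Import Order.TTheory GRing.Theory Num.Theory.
Set Implicit Arguments. Unset Strict Implicit. Unset Printing Implicit Defensive.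
Local Open Scope classical_set_scope.
Local Open Scope ring_scope.

Section ExtremaOfSets.
Variable R : realType.
Implicit Types (S : set R) (c s : R).

Lemma join0_ub S s : S s -> (forall t, S t -> t <= 1) -> s <= join0 S.
Proof.
move=> Ss S_le1; rewrite /join0; case: pselect => [S_ne|S0]; last by case: S0; exists s.
exact: (sup_upper_bound (conj S_ne (ex_intro _ 1 S_le1))).
Qed.

Lemma join0_le S c : 0 <= c -> (forall t, S t -> t <= c) -> join0 S <= c.
Proof. by move=> c_ge0 S_lec; rewrite /join0; case: pselect => // S_ne; apply: ge_sup. Qed.

Lemma meet1_lb S s : S s -> (forall t, S t -> 0 <= t) -> meet1 S <= s.
Proof.
move=> Ss S_ge0; rewrite /meet1; case: pselect => [S_ne|S0]; last by case: S0; exists s.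
exact: (ge_inf (ex_intro _ 0 S_ge0)).
Qed.

Lemma meet1_ge S c : c <= 1 -> (forall t, S t -> c <= t) -> c <= meet1 S.
Proof.
by move=> c_le1 S_gec; rewrite /meet1; case: pselect => // S_ne; apply: lb_le_inf.
Qed.

Lemma join0_in01 S : (forall t, S t -> 0 <= t <= 1) -> 0 <= join0 S <= 1.
Proof.
move=> S01; apply/andP; split; last by apply: join0_le => // t /S01 /andP[].
have [[s Ss]|S0] := pselect (S !=set0); last by rewrite /join0; case: pselect => // /S0.
apply: le_trans (join0_ub Ss _); first by have /andP[] := S01 _ Ss.
by move=> t /S01 /andP[].
Qed.

Lemma meet1_in01 S : (forall t, S t -> 0 <= t <= 1) -> 0 <= meet1 S <= 1.
Proof.
move=> S01; apply/andP; split; first by apply: meet1_ge => // t /S01 /andP[].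
have [[s Ss]|S0] := pselect (S !=set0); last by rewrite /meet1; case: pselect => // /S0.
apply: le_trans (meet1_lb Ss _) _; last by have /andP[] := S01 _ Ss.
by move=> t /S01 /andP[].
Qed.

Lemma seq_has_min (s : seq R) x : x \in s ->
  exists2 m, m \in s & forall y, y \in s -> m <= y.
Proof.
elim: s x => // y s IH _ _; case: s IH => [_|z s IH].
  by exists y => [|t]; rewrite ?mem_head // mem_seq1 => /eqP->.
have [m ms m_min] := IH _ (mem_head z s).
have [y_le_m|m_lt_y] := leP y m.
  exists y => [|t]; first exact: mem_head.
  by rewrite inE => /predU1P[->//|/m_min]; apply: le_trans.
exists m => [|t]; first by rewrite inE ms orbT.
by rewrite inE => /predU1P[->|/m_min //]; apply: ltW.
Qed.

Lemma finite_inf_in S : finite_set S -> S !=set0 -> S (inf S).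
Proof.
move=> /finite_seqP[s ->] [x /= xs]; have [m ms m_min] := seq_has_min xs.
suff -> : inf [set` s] = m by [].
apply/eqP; rewrite eq_le lb_le_inf ?andbT; [|by exists x|by move=> t /m_min].
by apply: ge_inf => //; exists m => t /m_min.
Qed.

Lemma meet1_eq0 S : finite_set S -> (forall t, S t -> 0 <= t) ->
  meet1 S = 0 <-> S 0.
Proof.
move=> S_fin S_ge0; split => [|S0]; last first.
  by apply/eqP; rewrite eq_le meet1_lb //= meet1_ge ?ler01.
rewrite /meet1; case: pselect => [S_ne <-|_ /eqP]; last by rewrite oner_eq0.
exact: finite_inf_in.
Qed.

Lemma join0_eq0 S : (forall t, S t -> 0 <= t <= 1) ->
  join0 S = 0 <-> forall t, S t -> t = 0.
Proof.
move=> S01; split => [S_eq0 t St|S_eq0]; last first.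
  apply/eqP; rewrite eq_le join0_le //=; last by move=> t /S_eq0->.
  by case/andP: (join0_in01 S01).
apply/eqP; rewrite eq_le; have /andP[-> _] := S01 _ St; rewrite andbT -S_eq0.
by apply: join0_ub => // u /S01 /andP[].
Qed.

End ExtremaOfSets.

Lemma max_le_addD (R : realDomainType) (u v u1 v1 u2 v2 : R) :
  u <= u1 + u2 -> v <= v1 + v2 -> Num.max u v <= Num.max u1 v1 + Num.max u2 v2.
Proof.
move=> le_u le_v; rewrite ge_max; apply/andP; split.
  by apply: le_trans le_u _; apply: lerD; rewrite le_max lexx.
by apply: le_trans le_v _; apply: lerD; rewrite le_max lexx orbT.
Qed.

Lemma max_eq0 (R : realDomainType) (u v : R) : 0 <= u -> 0 <= v ->
  Num.max u v = 0 <-> u = 0 /\ v = 0.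
Proof.
move=> u_ge0 v_ge0; split => [|[-> ->]]; last exact: maxxx.
move=> /eqP; rewrite eq_le ge_max => /andP[/andP[u_le0 v_le0] _].
by split; apply/eqP; rewrite eq_le ?u_le0 ?v_le0.
Qed.

Section PseudometricsAndPreorders.
Variables (R : realType) (X : Type).
Implicit Types (d : X -> X -> R) (S : X -> X -> Prop).

Definition valued01 d := forall x y, 0 <= d x y <= 1.

Lemma alpha_preorder d : DPMet d -> preorder (alpha d).
Proof.
move=> [d01 [d_refl d_triangle]]; split=> // x y z dxy0 dyz0.
apply/eqP; rewrite eq_le; have /andP[-> _] := d01 x z; rewrite andbT.
by have := d_triangle x y z; rewrite dxy0 dyz0 addr0.
Qed.

Lemma gamma_eq0 S x y : S x y -> gamma R S x y = 0.
Proof. by rewrite /gamma; case: pselect => // Sxy _; rewrite subrr. Qed.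

Lemma gamma_eq1 S x y : ~ S x y -> gamma R S x y = 1.
Proof. by rewrite /gamma; case: pselect => // nSxy _; rewrite subr0. Qed.

Lemma gamma_in01 S : valued01 (gamma R S).
Proof.
move=> x y; have [/gamma_eq0 ->|/gamma_eq1 ->] := pselect (S x y).
  by rewrite lexx ler01.
by rewrite ler01 lexx.
Qed.

Lemma alpha_gamma S : alpha (gamma R S) = S.
Proof.
apply/funext => x; apply/funext => y; apply/propext; rewrite /alpha.
split=> [|/gamma_eq0 //].
by have [//|/gamma_eq1 -> /eqP] := pselect (S x y); rewrite oner_eq0.
Qed.

Lemma gamma_DPMet S : preorder S -> DPMet (gamma R S).
Proof.
move=> [S_refl S_trans]; split; first exact: gamma_in01.
split=> [x|x y z]; first exact: gamma_eq0.
have /andP[xy_ge0 _] := gamma_in01 S x y; have /andP[yz_ge0 _] := gamma_in01 S y z.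
have [/gamma_eq0 ->|nSxz] := pselect (S x z); first exact: addr_ge0.
rewrite (gamma_eq1 nSxz).
have [Sxy|/gamma_eq1 ->] := pselect (S x y); last by rewrite lerDl.
have [Syz|/gamma_eq1 ->] := pselect (S y z); last by rewrite lerDr.
by case: nSxz; apply: S_trans Syz.
Qed.

End PseudometricsAndPreorders.

Section SimulationDistance.
Variables (R : realType) (X A : Type).
Variables (trans : X -> A -> X -> Prop) (dA : A -> A -> R).
Hypothesis dA_metric : is_metric01 dA.
Implicit Types (d : X -> X -> R) (ax : A * X).

Definition move_dist d ax bz : R := Num.max (dA ax.1 bz.1) (d ax.2 bz.2).

Definition step_dist d ax y : R := meet1 [set move_dist d ax bz | bz in delta trans y].

Lemma betaSE d x y :
  betaS trans dA d x y = join0 [set step_dist d ax y | ax in delta trans x].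
Proof. by []. Qed.

Lemma dA_in01 a b : 0 <= dA a b <= 1.
Proof. by case: dA_metric => ->. Qed.

Lemma dA_refl a : dA a a = 0.
Proof. by case: dA_metric => _ [dA_eq0 _]; apply/dA_eq0. Qed.

Lemma move_dist_in01 d ax bz : valued01 d -> 0 <= move_dist d ax bz <= 1.
Proof.
move=> d01; have /andP[a0 a1] := dA_in01 ax.1 bz.1; have /andP[d0 d1] := d01 ax.2 bz.2.
by rewrite le_max a0 ge_max a1 d1.
Qed.

Lemma move_dist_ge0 d ax bz : valued01 d -> 0 <= move_dist d ax bz.
Proof. by move=> /(move_dist_in01 ax bz) /andP[]. Qed.

Lemma step_dist_in01 d ax y : valued01 d -> 0 <= step_dist d ax y <= 1.
Proof. by move=> d01; apply: meet1_in01 => _ [bz _ <-]; apply: move_dist_in01. Qed.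

Lemma step_dist_le_move d ax y bz : valued01 d -> delta trans y bz ->
  step_dist d ax y <= move_dist d ax bz.
Proof.
by move=> d01 ybz; apply: meet1_lb => [|_ [cz _ <-]]; [exists bz|exact: move_dist_ge0].
Qed.

Lemma betaS_in01 d : valued01 d -> valued01 (betaS trans dA d).
Proof. by move=> d01 x y; apply: join0_in01 => _ [ax _ <-]; apply: step_dist_in01. Qed.

Lemma step_dist_le_betaS d x y ax : valued01 d -> delta trans x ax ->
  step_dist d ax y <= betaS trans dA d x y.
Proof.
move=> d01 xax; apply: join0_ub => [|_ [bz _ <-]]; first by exists ax.
by have /andP[] := step_dist_in01 bz y d01.
Qed.

Lemma betaS_le d x y c : 0 <= c ->
  (forall ax, delta trans x ax -> step_dist d ax y <= c) -> betaS trans dA d x y <= c.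
Proof. by move=> c_ge0 step_le; apply: join0_le => // _ [ax xax <-]; apply: step_le. Qed.

Lemma betaS_mono d d' : valued01 d -> valued01 d' -> (forall x y, d x y <= d' x y) ->
  forall x y, betaS trans dA d x y <= betaS trans dA d' x y.
Proof.
move=> d01 d'01 le_dd' x y; apply: betaS_le => [|ax xax].
  by have /andP[] := betaS_in01 d'01 x y.
apply: le_trans (step_dist_le_betaS y d'01 xax).
apply: meet1_ge => [|_ [bz ybz <-]]; first by have /andP[] := step_dist_in01 ax y d01.
apply: le_trans (step_dist_le_move ax d01 ybz) _.
by rewrite ge_max !le_max lexx le_dd' orbT.
Qed.

Lemma move_dist_triangle d ax bz cz : (forall x y z, d x z <= d x y + d y z) ->
  move_dist d ax cz <= move_dist d ax bz + move_dist d bz cz.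
Proof.
move=> d_triangle; apply: max_le_addD => //.
by case: dA_metric => _ [_ [_ dA_triangle]].
Qed.

Lemma step_dist_triangle d ax bz z : DPMet d ->
  step_dist d ax z <= move_dist d ax bz + step_dist d bz z.
Proof.
move=> [d01 [_ d_triangle]].
suff : step_dist d ax z - move_dist d ax bz <= step_dist d bz z by lra.
apply: meet1_ge => [|_ [cz zcz <-]].
  have /andP[_ step_le1] := step_dist_in01 ax z d01.
  have move_ge0 := move_dist_ge0 ax bz d01; lra.
have := step_dist_le_move ax d01 zcz; have := move_dist_triangle ax bz cz d_triangle.
lra.
Qed.

Lemma step_dist_le_add_betaS d ax y z : DPMet d ->
  step_dist d ax z <= step_dist d ax y + betaS trans dA d y z.
Proof.
move=> d_pmet; have d01 := d_pmet.1.
suff : step_dist d ax z - betaS trans dA d y z <= step_dist d ax y by lra.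
apply: meet1_ge => [|_ [bz ybz <-]].
  have /andP[_ step_le1] := step_dist_in01 ax z d01.
  have /andP[betaS_ge0 _] := betaS_in01 d01 y z; lra.
have := step_dist_triangle ax bz z d_pmet; have := step_dist_le_betaS z d01 ybz.
lra.
Qed.

Lemma betaS_DPMet d : DPMet d -> DPMet (betaS trans dA d).
Proof.
move=> d_pmet; have [d01 [d_refl _]] := d_pmet.
split; first exact: betaS_in01.
split=> [x|x y z].
  apply/eqP; rewrite eq_le; have /andP[-> _] := betaS_in01 d01 x x; rewrite andbT.
  apply: betaS_le => // ax xax; apply: le_trans (step_dist_le_move ax d01 xax) _.
  by rewrite /move_dist dA_refl d_refl maxxx.
have /andP[xy_ge0 _] := betaS_in01 d01 x y; have /andP[yz_ge0 _] := betaS_in01 d01 y z.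
apply: betaS_le => [|ax xax]; first exact: addr_ge0.
apply: le_trans (step_dist_le_add_betaS ax y z d_pmet) _.
by rewrite lerD2r; apply: step_dist_le_betaS.
Qed.

Lemma move_dist_eq0 d ax bz : valued01 d ->
  move_dist d ax bz = 0 <-> ax.1 = bz.1 /\ d ax.2 bz.2 = 0.
Proof.
move=> d01; have /andP[dA_ge0 _] := dA_in01 ax.1 bz.1; have /andP[d_ge0 _] := d01 ax.2 bz.2.
rewrite /move_dist max_eq0 //; case: dA_metric => _ [dA_eq0 _].
by rewrite dA_eq0.
Qed.

Hypothesis trans_fb : finitely_branching trans.

Lemma step_dist_eq0 d ax y : valued01 d ->
  step_dist d ax y = 0 <-> exists y', trans y ax.1 y' /\ d ax.2 y' = 0.
Proof.
move=> d01; rewrite /step_dist meet1_eq0; last 2 first.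
- exact/finite_image/trans_fb.
- by move=> _ [bz _ <-]; apply: move_dist_ge0.
split=> [[[b y'] ybz /move_dist_eq0 [] // /= ab dy0]|[y' [yy' dy0]]].
  by exists y'; rewrite ab.
by exists (ax.1, y') => //; apply/move_dist_eq0.
Qed.

Lemma betaS_eq0 d x y : valued01 d ->
  betaS trans dA d x y = 0 <-> betas trans (alpha d) x y.
Proof.
move=> d01; rewrite betaSE join0_eq0 => [|_ [ax _ <-]]; last exact: step_dist_in01.
split=> [step_eq0 a x' xx'|sim _ [ax xax <-]]; last exact/step_dist_eq0/sim.
by apply/(step_dist_eq0 (a, x')) => //; apply: step_eq0; exists (a, x').
Qed.

Lemma alpha_betaS d : valued01 d -> alpha (betaS trans dA d) = betas trans (alpha d).
Proof. by move=> d01; apply/funext => x; apply/funext => y; apply/propext/betaS_eq0. Qed.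

Lemma betaS_gamma_le S : (forall x y, S x y -> betas trans S x y) ->
  forall x y, betaS trans dA (gamma R S) x y <= gamma R S x y.
Proof.
move=> S_sim x y; have [Sxy|nSxy] := pselect (S x y).
  have : betas trans (alpha (gamma R S)) x y by rewrite alpha_gamma; apply: S_sim.
  by move/(betaS_eq0 _ _ (gamma_in01 R S)) ->; rewrite (gamma_eq0 R Sxy).
by rewrite (gamma_eq1 R nSxy); have /andP[] := betaS_in01 (gamma_in01 R S) x y.
Qed.

End SimulationDistance.

Section LeastFixpoint.
Variables (R : realType) (X : Type) (F : (X -> X -> R) -> X -> X -> R).
Hypothesis F_DPMet : forall d, DPMet d -> DPMet (F d).
Hypothesis F_mono : forall d d', DPMet d -> DPMet d' ->
  (forall x y, d x y <= d' x y) -> forall x y, F d x y <= F d' x y.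
Implicit Types (d e p : X -> X -> R).

Definition prefixpoint p := DPMet p /\ forall x y, F p x y <= p x y.

Definition below_prefixpoints e :=
  DPMet e /\ forall p, prefixpoint p -> forall x y, e x y <= p x y.

(* The meet of the pre-fixpoints in DPMet(X).  Their pointwise infimum may
   violate the triangle inequality, whereas a pointwise supremum of directed
   pseudometrics is again one. *)
Definition lfp x y : R := sup [set e x y | e in below_prefixpoints].

Lemma below_prefixpoints0 : below_prefixpoints (fun _ _ => 0).
Proof.
split=> [|p [[p01 _] _] x y]; last by have /andP[] := p01 x y.
by split=> [x y|]; [rewrite lexx ler01|split=> // x y z; rewrite addr0].
Qed.

Lemma lfp_set_neq0 x y : [set e x y | e in below_prefixpoints] !=set0.
Proof. by exists 0, (fun _ _ => 0); first exact: below_prefixpoints0. Qed.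

Lemma lfp_ub e x y : below_prefixpoints e -> e x y <= lfp x y.
Proof.
move=> e_below; apply: sup_upper_bound; last by exists e.
split; first exact: lfp_set_neq0.
by exists 1 => _ [e' [[e'01 _] _] <-]; have /andP[] := e'01 x y.
Qed.

Lemma lfp_le x y c : (forall e, below_prefixpoints e -> e x y <= c) -> lfp x y <= c.
Proof.
by move=> le_c; apply: ge_sup => [|_ [e e_below <-]]; [exact: lfp_set_neq0|apply: le_c].
Qed.

Lemma lfp_DPMet : DPMet lfp.
Proof.
have lfp_ge0 x y : 0 <= lfp x y := lfp_ub x y below_prefixpoints0.
split=> [x y|].
  by rewrite lfp_ge0 /=; apply: lfp_le => e [[e01 _] _]; case/andP: (e01 x y).
split=> [x|x y z].
  by apply/eqP; rewrite eq_le lfp_ge0 andbT; apply: lfp_le => e [[_ [-> _]] _].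
apply: lfp_le => e e_below; have [[_ [_ e_triangle]] _] := e_below.
by apply: le_trans (e_triangle x y z) _; apply: lerD; apply: lfp_ub.
Qed.

Lemma lfp_below_prefixpoints : below_prefixpoints lfp.
Proof.
split=> [|p p_pre x y]; first exact: lfp_DPMet.
by apply: lfp_le => e [_ e_le]; apply: e_le.
Qed.

Lemma lfp_prefixpoint : prefixpoint lfp.
Proof.
have [lfp_pmet lfp_le_pre] := lfp_below_prefixpoints.
split=> // x y; apply: lfp_ub; split; first exact: F_DPMet.
move=> p p_pre u v; have [p_pmet Fp_le] := p_pre.
by apply: le_trans (Fp_le u v); apply: F_mono => //; apply: lfp_le_pre.
Qed.

Lemma F_lfp : F lfp = lfp.
Proof.
have [lfp_pmet F_le] := lfp_prefixpoint.
apply/funext => x; apply/funext => y; apply/eqP; rewrite eq_le F_le /=.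
apply: lfp_below_prefixpoints.2; split; first exact: F_DPMet.
by apply: F_mono => //; apply: F_DPMet.
Qed.

Lemma is_lfp_DPMet_lfp : is_lfp_DPMet F lfp.
Proof.
split; first exact: lfp_DPMet.
split=> [|d d_pmet Fd]; first exact: F_lfp.
by apply: lfp_below_prefixpoints.2; split=> // x y; rewrite Fd.
Qed.

End LeastFixpoint.

Theorem mainTheorem18 (R : realType) (X A : Type)
  (trans : X -> A -> X -> Prop) (dA : A -> A -> R)
  (hfb : finitely_branching trans) (hdA : is_metric01 dA) :
  (forall d : X -> X -> R, DPMet d ->
     alpha (betaS trans dA d) = betas trans (alpha d)) /\
  (exists m, is_lfp_DPMet (betaS trans dA) m) /\
  (forall m, is_lfp_DPMet (betaS trans dA) m ->
     is_lfp_Pre (betas trans) (alpha m)).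
Proof.
have F_DPMet := betaS_DPMet trans hdA.
have F_mono : forall d d', DPMet d -> DPMet d' -> (forall x y, d x y <= d' x y) ->
    forall x y, betaS trans dA d x y <= betaS trans dA d' x y.
  by move=> d d' [d01 _] [d'01 _]; apply: betaS_mono.
have mu_lfp := is_lfp_DPMet_lfp F_DPMet F_mono; have [mu_pmet [mu_fix _]] := mu_lfp.
split; first by move=> d [d01 _]; apply: alpha_betaS.
split; first by exists (lfp (betaS trans dA)); exact: mu_lfp.
move=> m [m_pmet [m_fix m_least]]; split; first exact: alpha_preorder.
split; first by rewrite -(alpha_betaS hdA hfb) ?m_fix //; case: m_pmet.
move=> S S_pre S_fix x y Sxy.
have S_sim : forall u v, S u v -> betas trans S u v by rewrite S_fix.
have m_le_gamma : m x y <= gamma R S x y.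
  apply: le_trans (m_least _ mu_pmet mu_fix x y) _.
  apply: (lfp_below_prefixpoints (betaS trans dA)).2.
  by split; [exact: gamma_DPMet|exact: betaS_gamma_le].
have [m01 _] := m_pmet; have /andP[m_ge0 _] := m01 x y.
by apply/eqP; rewrite eq_le m_ge0 andbT -(gamma_eq0 R Sxy).
Qed.
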